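(* Let $\alpha\in(0,1]$ and let $n$ be such that $n^\alpha=2^q$ for a positive integer $q$. Let $G_m$ be a planar 3-tree with $m\in\mathbb{N}$ vertices, given with a combinatorial (plane) embedding whose outer face has vertices $u,v,z$. Let $p_1,p_2,p_3\in B_n$ be points such that one of them has strictly largest $y$-coordinate, and let $R\subseteq\Box(\Delta(p_1,p_2,p_3))$ be an open axis-aligned rectangle with $w(R)h(R)>8m^2n^\alpha$, $w(R)>2m$ and $h(R)>m$. Then $G_m$ admits a planar straight-line embedding in which $u,v,z$ are mapped to $\tau(p_1),\tau(p_2),\tau(p_3)$, respectively, and every interior vertex of $G_m$ is mapped to a point $\tau(p)$ with $p\in B_n\cap R$.
   Context: A planar 3-tree is obtained from a triangle by repeatedly inserting a new vertex into a triangular face and joining it to the three vertices of that face. Let $A_n=\{(i,j)\in\mathbb{Z}^2: 0\le i,j\le 14n\}$. The sparse grid $B_n\subseteq A_n$ is the set of points of $A_n$ of at least one of the following forms: (1) $(i,j)$ with $n^\alpha \mid ij$; (2) $(i+k,j+k)$ with $n^\alpha\mid i$, $n^\alpha\mid j$, $k\in\{1,\dots,n^\alpha\}$; (3) $(i+k,j-k)$ with $n^\alpha\mid i$, $n^\alpha\mid j$, $k\in\{1,\dots,n^\alpha\}$. Let $\tau:\mathbb{R}^2\to\mathbb{R}^2$, $\tau(x,y)=(x,(28n)^y)$. For three points of $A_n$, relabel them (if necessary) as $(a_1,b_1),(a_2,b_2),(a_3,b_3)$ so that $\max(b_1,b_2)<b_3$, and define the open rectangle $\Box(\Delta)=(\min(a_1,a_2),\max(a_1,a_2))\times(\max(b_1,b_2),b_3)$.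 For an open rectangle $R=(x_1,x_2)\times(y_1,y_2)$, $w(R)=x_2-x_1$ and $h(R)=y_2-y_1$. A planar straight-line embedding maps vertices to distinct points and edges to pairwise non-crossing straight segments. *)

From Stdlib Require Import Reals ZArith List.
Open Scope R_scope.

(* A stacking tree: Leaf = an empty triangular face; Node t1 t2 t3 = a new
   vertex inserted into the face, splitting it into three faces filled by
   t1, t2, t3. *)
Inductive stack : Type :=
| Leaf : stack
| Node : stack -> stack -> stack -> stack.

Fixpoint nins (t : stack) : nat :=
  match t with
  | Leaf => 0
  | Node t1 t2 t3 => S (nins t1 + nins t2 + nins t3)
  end.

Definition nverts (t : stack) : nat := 3 + nins t.

(* edges created when filling face (a,b,c) with t, fresh labels from k *)
Fixpoint st_edges (t : stack) (a b c k : nat) : list (nat * nat) :=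
  match t with
  | Leaf => nil
  | Node t1 t2 t3 =>
      (k, a) :: (k, b) :: (k, c) ::
      (st_edges t1 a b k (k + 1)
       ++ st_edges t2 b c k (k + 1 + nins t1)
       ++ st_edges t3 a c k (k + 1 + nins t1 + nins t2))
  end.

(* The planar 3-tree G(t): vertices 0 .. nverts t - 1; the outer face is the
   triangle on vertices 0 (= u), 1 (= v), 2 (= z); vertices >= 3 are the
   interior vertices. *)
Definition p3t_edges (t : stack) : list (nat * nat) :=
  (0, 1)%nat :: (1, 2)%nat :: (0, 2)%nat :: st_edges t 0 1 2 3.

Definition pt := (R * R)%type.

Definition on_seg (p q r : pt) : Prop :=
  exists s : R, 0 <= s <= 1 /\
    fst r = (1 - s) * fst p + s * fst q /\
    snd r = (1 - s) * snd p + s * snd q.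

Definition straight_line_planar (N : nat) (E : list (nat * nat))
  (pos : nat -> pt) : Prop :=
  (forall i j, (i < N)%nat -> (j < N)%nat -> pos i = pos j -> i = j) /\
  (forall a b w, In (a, b) E -> (w < N)%nat -> w <> a -> w <> b ->
      ~ on_seg (pos a) (pos b) (pos w)) /\
  (forall a b c d, In (a, b) E -> In (c, d) E ->
      ~ (a = c /\ b = d) -> ~ (a = d /\ b = c) ->
      forall r, on_seg (pos a) (pos b) r -> on_seg (pos c) (pos d) r ->
        (r = pos a /\ (a = c \/ a = d)) \/ (r = pos b /\ (b = c \/ b = d))).

(* N plays the role of n^alpha (an integer). *)
Definition inA (n : nat) (p : Z * Z) : Prop :=
  (0 <= fst p <= 14 * Z.of_nat n)%Z /\ (0 <= snd p <= 14 * Z.of_nat n)%Z.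

Definition inB (n N : nat) (p : Z * Z) : Prop :=
  inA n p /\
  ( (Z.of_nat N | fst p * snd p)%Z
  \/ (exists i j k : Z, (Z.of_nat N | i)%Z /\ (Z.of_nat N | j)%Z /\
        (1 <= k <= Z.of_nat N)%Z /\ p = (i + k, j + k)%Z)
  \/ (exists i j k : Z, (Z.of_nat N | i)%Z /\ (Z.of_nat N | j)%Z /\
        (1 <= k <= Z.of_nat N)%Z /\ p = (i + k, j - k)%Z)).

Definition tau (n : nat) (p : Z * Z) : pt :=
  (IZR (fst p), powerRZ (INR (28 * n)) (snd p)).

Definition in_open_rect (x1 x2 y1 y2 : R) (r : pt) : Prop :=
  x1 < fst r < x2 /\ y1 < snd r < y2.

Definition box_top (p1 p2 p3 : Z * Z) (r : pt) : Prop :=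
  (Z.max (snd p1) (snd p2) < snd p3)%Z /\
  in_open_rect (IZR (Z.min (fst p1) (fst p2))) (IZR (Z.max (fst p1) (fst p2)))
               (IZR (Z.max (snd p1) (snd p2))) (IZR (snd p3)) r.

(* Box(Delta(p1,p2,p3)) after relabelling so the highest point is last *)
Definition in_box (p1 p2 p3 : Z * Z) (r : pt) : Prop :=
  box_top p1 p2 p3 r \/ box_top p2 p3 p1 r \/ box_top p1 p3 p2 r.

Definition has_strict_top (p1 p2 p3 : Z * Z) : Prop :=
  (Z.max (snd p1) (snd p2) < snd p3)%Z \/
  (Z.max (snd p2) (snd p3) < snd p1)%Z \/
  (Z.max (snd p1) (snd p3) < snd p2)%Z.

Definition IZpt (p : Z * Z) : pt := (IZR (fst p), IZR (snd p)).

From Stdlib Require Import Reals ZArith List Lia Lra Psatz Classical.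
Open Scope R_scope.

(* The drawing follows the stacking: every inserted vertex is put at a point of
   the sparse grid lying in the box of the face it is inserted into.  The map
   [tau] stretches heights exponentially with base [28 n], twice the width of
   the grid, so for a triangle with a strictly highest vertex it sends every
   lattice point of its box strictly inside the image of the triangle.  A
   drawing in which each inserted vertex lies strictly inside its face is
   planar, since any two of the three subfaces are separated by the line
   through their common edge.  There is room for all vertices: with [d = 2^a],
   [e = 2^(q-a)] the points [(d x, e y)] belong to [B_n], as
   [d e = n^alpha] divides [d x * e y], and the area bound lets us choose [a]
   so that an [s] x [s] array of them, [s] the number of inserted vertices,
   fits into [R].  Such an array in the box of a face can be shared out
   between the new vertex and the boxes of its three subfaces. *)

(** * Orientation and triangles *)

Definition orient (P Q X : pt) : R :=
  (fst Q - fst P) * (snd X - snd P) - (snd Q - snd P) * (fst X - fst P).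

Lemma orient_cyc P Q X : orient P Q X = orient Q X P.
Proof. unfold orient; ring. Qed.

Lemma orient_anti P Q X : orient P Q X = - orient Q P X.
Proof. unfold orient; ring. Qed.

Lemma orient_split P Q R X : orient P Q X + orient Q R X + orient R P X = orient P Q R.
Proof. unfold orient; ring. Qed.

Lemma orient_PPX P X : orient P P X = 0.
Proof. unfold orient; ring. Qed.

Lemma orient_PQP P Q : orient P Q P = 0.
Proof. unfold orient; ring. Qed.

Lemma orient_PQQ P Q : orient P Q Q = 0.
Proof. unfold orient; ring. Qed.

Lemma on_seg_sym P Q r : on_seg P Q r -> on_seg Q P r.
Proof.
  intros [s [Hs [H1 H2]]]. exists (1 - s).
  split; [lra|]. split; [rewrite H1|rewrite H2]; ring.
Qed.

Lemma on_seg_orient P Q r : on_seg P Q r ->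
  exists s, 0 <= s <= 1 /\
    (forall U W, orient U W r = (1 - s) * orient U W P + s * orient U W Q) /\
    (s = 0 -> r = P) /\ (s = 1 -> r = Q).
Proof.
  intros [s [Hs [H1 H2]]]. exists s. split; [lra|]. split.
  - intros U W. unfold orient. rewrite H1, H2. ring.
  - split; intros ->; destruct r, P, Q; simpl in *; f_equal; lra.
Qed.

Lemma on_seg_collinear P Q r : on_seg P Q r -> orient P Q r = 0.
Proof.
  intros H. destruct (on_seg_orient _ _ _ H) as [s [_ [E _]]].
  rewrite E, orient_PQP, orient_PQQ. ring.
Qed.

Lemma on_seg_common_end P Q R r :
  on_seg P Q r -> on_seg Q R r -> orient P Q R <> 0 -> r = Q.
Proof.
  intros H1 H2 Hn. destruct (on_seg_orient _ _ _ H2) as [s [_ [E [E0 _]]]].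
  apply E0. pose proof (on_seg_collinear _ _ _ H1) as Z.
  rewrite E, orient_PQQ in Z.
  destruct (Rmult_integral s (orient P Q R)) as [|]; [lra|auto|contradiction].
Qed.

(* The sign [s] fixes the orientation of a triangle, so that both
   orientations are handled by the same inequalities. *)
Definition sign (s : R) : Prop := s = 1 \/ s = -1.

Lemma sign_opp s : sign s -> sign (- s).
Proof. intros [->| ->]; [right|left]; ring. Qed.

Definition inside_with (s : R) (P Q R X : pt) : Prop :=
  0 < s * orient P Q X /\ 0 < s * orient Q R X /\ 0 < s * orient R P X.

Definition inside (P Q R X : pt) : Prop := exists s, sign s /\ inside_with s P Q R X.

Lemma inside_withE P Q R X s :
  inside P Q R X -> sign s -> 0 < s * orient P Q R -> inside_with s P Q R X.
Proof.
  intros [s' [Hs' [H1 [H2 H3]]]] Hs Ho. pose proof (orient_split P Q R X).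
  unfold inside_with. destruct Hs as [->| ->], Hs' as [->| ->]; lra.
Qed.

Lemma inside_orient P Q R X : inside P Q R X ->
  exists s, sign s /\ 0 < s * orient P Q R /\ inside_with s P Q R X.
Proof.
  intros [s [Hs H]]. exists s. split; [auto|]. split; [|auto].
  destruct H as [H1 [H2 H3]]. pose proof (orient_split P Q R X).
  destruct Hs as [->| ->]; lra.
Qed.

Lemma inside_nondeg P Q R X : inside P Q R X -> orient P Q R <> 0.
Proof.
  intros H. destruct (inside_orient _ _ _ _ H) as [s [_ [Ho _]]].
  intros E. rewrite E in Ho. lra.
Qed.

Lemma inside_cyc P Q R X : inside P Q R X -> inside Q R P X.
Proof. intros [s [Hs [H1 [H2 H3]]]]. exists s. repeat split; auto. Qed.

Lemma inside_swap P Q R X : inside P Q R X -> inside Q P R X.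
Proof.
  intros [s [Hs [H1 [H2 H3]]]]. exists (- s). split; [now apply sign_opp|].
  unfold inside_with.
  rewrite (orient_anti Q P X), (orient_anti P R X), (orient_anti R Q X).
  repeat split; lra.
Qed.

Lemma inside_trans A B C K P :
  inside A B C K -> inside A B K P -> inside A B C P.
Proof.
  intros H1 H2. destruct (inside_orient _ _ _ _ H1) as [s [Hs [Ho [K1 [K2 K3]]]]].
  destruct (inside_withE _ _ _ _ s H2 Hs K1) as [P1 [P2 P3]].
  exists s. split; [auto|]. split; [auto|].
  (* Cramer's rule expresses the position of P relative to BC and CA
     through its position relative to the sides of ABK. *)
  assert (E1 : orient A B K * orient B C P =
    orient B K P * orient B C A + orient A B P * orient B C K)
    by (unfold orient; ring).
  assert (E2 : orient A B K * orient C A P =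
    orient K A P * orient C A B + orient A B P * orient C A K)
    by (unfold orient; ring).
  rewrite <- (orient_cyc A B C) in E1.
  rewrite (orient_cyc C A B) in E2.
  destruct Hs as [->| ->]; split; nra.
Qed.

Lemma inside_subtriangles_nondeg P Q R K : inside P Q R K ->
  orient P Q K <> 0 /\ orient Q R K <> 0 /\ orient P R K <> 0.
Proof.
  intros H. destruct (inside_orient _ _ _ _ H) as [s [_ [_ [K1 [K2 K3]]]]].
  rewrite (orient_anti P R K).
  repeat split; intros E; [rewrite E in K1|rewrite E in K2|]; try lra.
  assert (E' : orient R P K = 0) by lra. rewrite E' in K3. lra.
Qed.

(** * Planar drawings of stacked triangulations *)

(* The conditions of [straight_line_planar] between the edges [E1] and
   vertices [V1] of one drawing and those of another; with both drawings
   equal it is [straight_line_planar] itself. *)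
Definition crossing_free (E1 : nat -> nat -> Prop) (V1 : nat -> Prop)
    (E2 : nat -> nat -> Prop) (V2 : nat -> Prop) (pos : nat -> pt) : Prop :=
  (forall i j, V1 i -> V2 j -> pos i = pos j -> i = j) /\
  (forall a b w, E1 a b -> V2 w -> w <> a -> w <> b ->
      ~ on_seg (pos a) (pos b) (pos w)) /\
  (forall a b c d, E1 a b -> E2 c d -> ~ (a = c /\ b = d) -> ~ (a = d /\ b = c) ->
      forall r, on_seg (pos a) (pos b) r -> on_seg (pos c) (pos d) r ->
        (r = pos a /\ (a = c \/ a = d)) \/ (r = pos b /\ (b = c \/ b = d))).

Definition planar (E : nat -> nat -> Prop) (V : nat -> Prop) (pos : nat -> pt) : Prop :=
  crossing_free E V E V pos.

Lemma crossing_free_sub E1 V1 E2 V2 E1' V1' E2' V2' pos :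
  (forall a b, E1' a b -> E1 a b) -> (forall x, V1' x -> V1 x) ->
  (forall a b, E2' a b -> E2 a b) -> (forall x, V2' x -> V2 x) ->
  crossing_free E1 V1 E2 V2 pos -> crossing_free E1' V1' E2' V2' pos.
Proof.
  intros SE1 SV1 SE2 SV2 [C1 [C2 C3]]. split; [|split].
  - intros i j Hi Hj. apply C1; auto.
  - intros a b w Hab Hw. apply C2; auto.
  - intros a b c d Hab Hcd. apply C3; auto.
Qed.

Lemma crossing_free_unionl E1 V1 E2 V2 F W pos :
  crossing_free E1 V1 F W pos -> crossing_free E2 V2 F W pos ->
  crossing_free (fun a b => E1 a b \/ E2 a b) (fun x => V1 x \/ V2 x) F W pos.
Proof.
  intros [A1 [A2 A3]] [B1 [B2 B3]]. split; [|split].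
  - intros i j [Hi|Hi] Hj; [apply A1|apply B1]; auto.
  - intros a b w [Hab|Hab] Hw; [apply A2|apply B2]; auto.
  - intros a b c d [Hab|Hab] Hcd; [apply A3|apply B3]; auto.
Qed.

Lemma crossing_free_unionr E V F1 W1 F2 W2 pos :
  crossing_free E V F1 W1 pos -> crossing_free E V F2 W2 pos ->
  crossing_free E V (fun a b => F1 a b \/ F2 a b) (fun x => W1 x \/ W2 x) pos.
Proof.
  intros [A1 [A2 A3]] [B1 [B2 B3]]. split; [|split].
  - intros i j Hi [Hj|Hj]; [apply A1|apply B1]; auto.
  - intros a b w Hab [Hw|Hw]; [apply A2|apply B2]; auto.
  - intros a b c d Hab [Hcd|Hcd]; [apply A3|apply B3]; auto.
Qed.

Lemma planar_union3 E1 V1 E2 V2 E3 V3 pos :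
  planar E1 V1 pos -> planar E2 V2 pos -> planar E3 V3 pos ->
  crossing_free E1 V1 E2 V2 pos -> crossing_free E2 V2 E1 V1 pos ->
  crossing_free E1 V1 E3 V3 pos -> crossing_free E3 V3 E1 V1 pos ->
  crossing_free E2 V2 E3 V3 pos -> crossing_free E3 V3 E2 V2 pos ->
  planar (fun a b => E1 a b \/ E2 a b \/ E3 a b) (fun x => V1 x \/ V2 x \/ V3 x) pos.
Proof.
  intros. unfold planar.
  repeat apply crossing_free_unionl; repeat apply crossing_free_unionr; assumption.
Qed.

Definition tri (a b c x y : nat) : Prop :=
  (x = a /\ y = b) \/ (x = b /\ y = a) \/ (x = b /\ y = c) \/ (x = c /\ y = b) \/
  (x = a /\ y = c) \/ (x = c /\ y = a).

Lemma planar_triangle a b c pos : orient (pos a) (pos b) (pos c) <> 0 ->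
  planar (tri a b c) (fun x => x = a \/ x = b \/ x = c) pos.
Proof.
  intros Hn.
  assert (N : orient (pos b) (pos c) (pos a) <> 0 /\ orient (pos c) (pos a) (pos b) <> 0 /\
              orient (pos b) (pos a) (pos c) <> 0 /\ orient (pos a) (pos c) (pos b) <> 0 /\
              orient (pos c) (pos b) (pos a) <> 0).
  { pose proof (orient_cyc (pos a) (pos b) (pos c)).
    pose proof (orient_cyc (pos b) (pos c) (pos a)).
    pose proof (orient_anti (pos b) (pos a) (pos c)).
    pose proof (orient_anti (pos a) (pos c) (pos b)).
    pose proof (orient_anti (pos c) (pos b) (pos a)).
    repeat split; lra. }
  destruct N as [N1 [N2 [N3 [N4 N5]]]].
  assert (Nab : a <> b) by (intros ->; apply Hn, orient_PPX).
  assert (Nbc : b <> c) by (intros ->; apply Hn, orient_PQQ).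
  assert (Nac : a <> c) by (intros ->; apply Hn, orient_PQP).
  split; [|split].
  - intros i j [-> | [-> | ->]] [-> | [-> | ->]] E; auto; exfalso; rewrite E in *;
      rewrite ?orient_PPX, ?orient_PQP, ?orient_PQQ in *; lra.
  - intros x y w Hxy [-> | [-> | ->]] Nx Ny Hon; apply on_seg_collinear in Hon;
      destruct Hxy as [[-> ->]|[[-> ->]|[[-> ->]|[[-> ->]|[[-> ->]|[-> ->]]]]]];
      congruence || lra.
  - intros x y z w Hxy Hzw Nxz Nyw r H1 H2.
    destruct Hxy as [[-> ->]|[[-> ->]|[[-> ->]|[[-> ->]|[[-> ->]|[-> ->]]]]]];
    destruct Hzw as [[-> ->]|[[-> ->]|[[-> ->]|[[-> ->]|[[-> ->]|[-> ->]]]]]];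
    try tauto;
    first
      [ left; split; [|tauto]; eapply on_seg_common_end;
        [apply on_seg_sym; exact H1 | exact H2 || (apply on_seg_sym; exact H2) | assumption]
      | right; split; [|tauto]; eapply on_seg_common_end;
        [exact H1 | exact H2 || (apply on_seg_sym; exact H2) | assumption] ].
Qed.

Definition edges_within (E : nat -> nat -> Prop) (V : nat -> Prop) : Prop :=
  forall a b, E a b -> V a /\ V b /\ a <> b.

Definition half_plane (s : R) (u w : nat) (V : nat -> Prop) (pos : nat -> pt) : Prop :=
  forall x, V x -> 0 <= s * orient (pos u) (pos w) (pos x) /\
    (s * orient (pos u) (pos w) (pos x) = 0 -> x = u \/ x = w).

Definition in_face (pos : nat -> pt) (V : nat -> Prop) (a b c : nat) : Prop :=
  forall x, V x -> x = a \/ x = b \/ x = c \/ inside (pos a) (pos b) (pos c) (pos x).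

Lemma in_face_cyc pos V a b c : in_face pos V a b c -> in_face pos V b c a.
Proof.
  intros H x Hx. destruct (H x Hx) as [->|[->|[->|I]]]; auto.
  do 3 right. now apply inside_cyc.
Qed.

Lemma in_face_swap pos V a b c : in_face pos V a b c -> in_face pos V b a c.
Proof.
  intros H x Hx. destruct (H x Hx) as [->|[->|[->|I]]]; auto.
  do 3 right. now apply inside_swap.
Qed.

Lemma on_seg_nonneg (U W P Q r : pt) s : on_seg P Q r ->
  0 <= s * orient U W P -> 0 <= s * orient U W Q -> 0 <= s * orient U W r.
Proof.
  intros H HP HQ. destruct (on_seg_orient _ _ _ H) as [t [Ht [E _]]]. rewrite E. nra.
Qed.

Lemma on_seg_touch s u w a b r E V pos :
  edges_within E V -> half_plane s u w V pos -> E a b ->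
  on_seg (pos a) (pos b) r -> s * orient (pos u) (pos w) r <= 0 ->
  (r = pos a /\ (a = u \/ a = w)) \/ (r = pos b /\ (b = u \/ b = w)) \/
  ((a = u \/ a = w) /\ (b = u \/ b = w)).
Proof.
  intros HE HV Hab Hr Hle. destruct (HE a b Hab) as [Va [Vb _]].
  destruct (HV a Va) as [Pa Za], (HV b Vb) as [Pb Zb].
  destruct (on_seg_orient _ _ _ Hr) as [t [Ht [E' [E0 E1]]]].
  rewrite E' in Hle.
  destruct (Req_dec t 0) as [->|N0]; [left; split; [auto|]; apply Za; nra|].
  destruct (Req_dec t 1) as [->|N1]; [right; left; split; [auto|]; apply Zb; nra|].
  right; right. split; [apply Za|apply Zb]; nra.
Qed.

Lemma crossing_free_separated s u w E1 V1 E2 V2 pos :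
  edges_within E1 V1 -> edges_within E2 V2 -> planar E1 V1 pos ->
  pos u <> pos w -> V1 u -> V1 w ->
  half_plane s u w V1 pos -> half_plane (- s) u w V2 pos ->
  crossing_free E1 V1 E2 V2 pos.
Proof.
  intros W1 W2 [G1 [G2 G3]] Huw U1 W1' S1 S2.
  assert (Zeq : forall x y, (x = u \/ x = w) -> (y = u \/ y = w) -> pos x = pos y -> x = y).
  { intros x y [->| ->] [->| ->] E; auto; exfalso; apply Huw; congruence. }
  split; [|split].
  - intros i j Hi Hj E. destruct (S1 i Hi) as [Ai Bi], (S2 j Hj) as [Aj Bj].
    rewrite E in Ai, Bi. apply Zeq; [apply Bi|apply Bj|auto]; lra.
  - intros a b x Hab Hx Na Nb Hon.
    destruct (W1 a b Hab) as [Va [Vb _]].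
    destruct (S2 x Hx) as [Ax Bx].
    destruct (Req_dec (s * orient (pos u) (pos w) (pos x)) 0) as [Z|Z].
    + apply (G2 a b x Hab); auto. destruct (Bx ltac:(lra)) as [->| ->]; auto.
    + pose proof (on_seg_nonneg (pos u) (pos w) _ _ _ s Hon
        (proj1 (S1 a Va)) (proj1 (S1 b Vb))). lra.
  - intros a b c d Hab Hcd N1 N2 r Hr1 Hr2.
    destruct (W1 a b Hab) as [Va [Vb Nab]], (W2 c d Hcd) as [Vc [Vd Ncd]].
    pose proof (on_seg_nonneg (pos u) (pos w) _ _ _ s Hr1
      (proj1 (S1 a Va)) (proj1 (S1 b Vb))) as Hge.
    pose proof (on_seg_nonneg (pos u) (pos w) _ _ _ (- s) Hr2
      (proj1 (S2 c Vc)) (proj1 (S2 d Vd))) as Hle.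
    (* [r] lies on the line [u w], which each segment meets only at [u] or [w]. *)
    pose proof (on_seg_touch s u w a b r E1 V1 pos W1 S1 Hab Hr1 ltac:(lra)) as HA.
    pose proof (on_seg_touch (- s) u w c d r E2 V2 pos W2 S2 Hcd Hr2 ltac:(lra)) as HC.
    clear - HA HC Huw Nab Ncd N1 N2.
    destruct HA as [[Ra [-> | ->]]|[[Rb [-> | ->]]|[[-> | ->] [-> | ->]]]];
    destruct HC as [[Rc [-> | ->]]|[[Rd [-> | ->]]|[[-> | ->] [-> | ->]]]];
    subst; try congruence; try tauto;
    try (exfalso; apply Huw; congruence).
Qed.

Lemma half_plane_of_face s x u w V pos : sign s ->
  0 < s * orient (pos x) (pos u) (pos w) -> in_face pos V x u w -> half_plane s u w V pos.
Proof.
  intros Hs Hx HV y Hy.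
  destruct (HV y Hy) as [->|[->|[->|Hin]]].
  - rewrite <- orient_cyc. split; [lra|]. intros; lra.
  - rewrite orient_PQP. split; [lra|auto].
  - rewrite orient_PQQ. split; [lra|auto].
  - destruct (inside_withE _ _ _ _ s Hin Hs Hx) as [_ [H _]].
    split; [lra|]. intros; lra.
Qed.

Lemma half_plane_swap s u w V pos : half_plane s w u V pos -> half_plane (- s) u w V pos.
Proof.
  intros H x Hx. rewrite orient_anti. destruct (H x Hx) as [A B].
  split; [lra|]. intros E. destruct B as [->| ->]; auto; lra.
Qed.

Lemma crossing_free_adjacent s x u w y E1 V1 E2 V2 pos :
  sign s -> 0 < s * orient (pos x) (pos u) (pos w) ->
  0 < s * orient (pos y) (pos w) (pos u) ->
  edges_within E1 V1 -> edges_within E2 V2 -> planar E1 V1 pos -> planar E2 V2 pos ->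
  in_face pos V1 x u w -> in_face pos V2 y w u ->
  V1 u -> V1 w -> V2 u -> V2 w ->
  crossing_free E1 V1 E2 V2 pos /\ crossing_free E2 V2 E1 V1 pos.
Proof.
  intros Hs Hx Hy W1 W2 G1 G2 F1 F2 U1 X1 U2 X2.
  assert (Huw : pos u <> pos w).
  { intros E. rewrite E, orient_PQQ in Hx. lra. }
  pose proof (half_plane_of_face s x u w V1 pos Hs Hx F1) as S1.
  pose proof (half_plane_swap s u w V2 pos
    (half_plane_of_face s y w u V2 pos Hs Hy F2)) as S2.
  split; [eapply crossing_free_separated; eauto|].
  apply (crossing_free_separated (- s) u w); auto.
  rewrite Ropp_involutive. exact S1.
Qed.

(* Any two of the three subtriangles around [k] lie on opposite sides of
   their common edge. *)
Lemma planar_glue_faces a b c k E1 V1 E2 V2 E3 V3 pos :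
  inside (pos a) (pos b) (pos c) (pos k) ->
  edges_within E1 V1 -> edges_within E2 V2 -> edges_within E3 V3 ->
  planar E1 V1 pos -> planar E2 V2 pos -> planar E3 V3 pos ->
  in_face pos V1 a b k -> in_face pos V2 b c k -> in_face pos V3 a c k ->
  V1 a -> V1 b -> V1 k -> V2 b -> V2 c -> V2 k -> V3 a -> V3 c -> V3 k ->
  planar (fun x y => E1 x y \/ E2 x y \/ E3 x y) (fun x => V1 x \/ V2 x \/ V3 x) pos.
Proof.
  intros HK W1 W2 W3 G1 G2 G3 F1 F2 F3 A1 B1 K1 B2 C2 K2 A3 C3 K3.
  destruct (inside_orient _ _ _ _ HK) as [s [Hs [_ [Oab [Obc Oca]]]]].
  destruct (crossing_free_adjacent s a b k c _ _ _ _ pos Hs Oab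
      ltac:(rewrite <- orient_cyc; exact Obc) W1 W2 G1 G2 F1
      ltac:(now apply in_face_cyc)) as [C12 C21]; auto.
  destruct (crossing_free_adjacent (- s) b a k c _ _ _ _ pos (sign_opp s Hs)
      ltac:(rewrite orient_anti; lra)
      ltac:(rewrite <- orient_cyc, orient_anti; lra)
      W1 W3 G1 G3 ltac:(now apply in_face_swap) ltac:(now apply in_face_cyc))
    as [C13 C31]; auto.
  destruct (crossing_free_adjacent s b c k a _ _ _ _ pos Hs Obc
      ltac:(rewrite <- orient_cyc; exact Oca)
      W2 W3 G2 G3 F2 ltac:(now apply in_face_swap, in_face_cyc, in_face_cyc))
    as [C23 C32]; auto.
  now apply planar_union3.
Qed.

(* Filling the face [a b c] with [t], the inserted vertices get the labels
   [k], ..., [k + nins t - 1]; [face_edge] also contains the edges of the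
   face itself, in both directions. *)
Fixpoint face_edge (t : stack) (a b c k : nat) : nat -> nat -> Prop :=
  match t with
  | Leaf => tri a b c
  | Node t1 t2 t3 => fun x y =>
      face_edge t1 a b k (k + 1) x y \/ face_edge t2 b c k (k + 1 + nins t1) x y \/
      face_edge t3 a c k (k + 1 + nins t1 + nins t2) x y
  end.

Definition face_vertex (t : stack) (a b c k x : nat) : Prop :=
  x = a \/ x = b \/ x = c \/ (k <= x < k + nins t)%nat.

Fixpoint stacked (F : nat -> nat -> nat -> nat -> Prop) (t : stack) (a b c k : nat) : Prop :=
  match t with
  | Leaf => True
  | Node t1 t2 t3 =>
      F a b c k /\ stacked F t1 a b k (k + 1) /\ stacked F t2 b c k (k + 1 + nins t1) /\
      stacked F t3 a c k (k + 1 + nins t1 + nins t2)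
  end.

Lemma tri_face_edge t : forall a b c k x y, tri a b c x y -> face_edge t a b c k x y.
Proof.
  induction t as [|t1 IH1 t2 IH2 t3 IH3]; intros a b c k x y H; simpl; auto.
  destruct H as [[-> ->]|[[-> ->]|[[-> ->]|[[-> ->]|[[-> ->]|[-> ->]]]]]];
    [left; apply IH1|left; apply IH1|right; left; apply IH2|right; left; apply IH2
    |right; right; apply IH3|right; right; apply IH3]; unfold tri; tauto.
Qed.

Lemma st_edges_face_edge t : forall a b c k x y,
  In (x, y) (st_edges t a b c k) -> face_edge t a b c k x y.
Proof.
  induction t as [|t1 IH1 t2 IH2 t3 IH3]; intros a b c k x y H; simpl in *; [contradiction|].
  destruct H as [E|[E|[E|H]]];
    [injection E as -> ->; left|injection E as -> ->; left
    |injection E as -> ->; right; left|]; try (apply tri_face_edge; unfold tri; tauto).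
  repeat rewrite in_app_iff in H. destruct H as [H|[H|H]]; auto.
Qed.

Lemma face_vertex_node t1 t2 t3 a b c k x :
  face_vertex (Node t1 t2 t3) a b c k x <->
  face_vertex t1 a b k (k + 1) x \/ face_vertex t2 b c k (k + 1 + nins t1) x \/
  face_vertex t3 a c k (k + 1 + nins t1 + nins t2) x.
Proof. unfold face_vertex; cbn [nins]. lia. Qed.

Lemma face_edges_within t : forall a b c k, a <> b -> b <> c -> a <> c ->
  (a < k)%nat -> (b < k)%nat -> (c < k)%nat ->
  edges_within (face_edge t a b c k) (face_vertex t a b c k).
Proof.
  unfold edges_within.
  induction t as [|t1 IH1 t2 IH2 t3 IH3]; intros a b c k Nab Nbc Nac Ha Hb Hc x y H.
  - unfold face_vertex.
    destruct H as [[-> ->]|[[-> ->]|[[-> ->]|[[-> ->]|[[-> ->]|[-> ->]]]]]]; intuition.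
  - rewrite !face_vertex_node.
    destruct H as [H|[H|H]]; [apply IH1 in H|apply IH2 in H|apply IH3 in H]; tauto || lia.
Qed.

Lemma stacked_impl (F F' : nat -> nat -> nat -> nat -> Prop) t : forall a b c k,
  (forall x y z v, face_vertex t a b c k x -> face_vertex t a b c k y ->
     face_vertex t a b c k z -> face_vertex t a b c k v -> F x y z v -> F' x y z v) ->
  stacked F t a b c k -> stacked F' t a b c k.
Proof.
  induction t as [|t1 IH1 t2 IH2 t3 IH3]; intros a b c k H S; simpl in *; auto.
  setoid_rewrite face_vertex_node in H.
  destruct S as [S0 [S1 [S2 S3]]]. split; [|split; [|split]].
  - apply H; [..|exact S0]; unfold face_vertex; lia.
  - apply IH1; [|exact S1]. intros x y z v Hx Hy Hz Hv. apply H; tauto.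
  - apply IH2; [|exact S2]. intros x y z v Hx Hy Hz Hv. apply H; tauto.
  - apply IH3; [|exact S3]. intros x y z v Hx Hy Hz Hv. apply H; tauto.
Qed.

Definition inside_at (pos : nat -> pt) (a b c x : nat) : Prop :=
  inside (pos a) (pos b) (pos c) (pos x).

Lemma stacked_inside pos t : forall a b c k, stacked (inside_at pos) t a b c k ->
  forall w, (k <= w < k + nins t)%nat -> inside_at pos a b c w.
Proof.
  unfold inside_at.
  induction t as [|t1 IH1 t2 IH2 t3 IH3]; intros a b c k S w Hw; simpl in *; [lia|].
  destruct S as [HK [S1 [S2 S3]]].
  destruct (Nat.eq_dec w k) as [->|Nk]; [exact HK|].
  destruct (le_lt_dec (k + 1 + nins t1) w) as [L1|L1];
    [destruct (le_lt_dec (k + 1 + nins t1 + nins t2) w) as [L2|L2]|].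
  - apply inside_cyc, inside_swap, (inside_trans _ _ _ (pos k)).
    + apply inside_cyc, inside_swap, HK.
    + apply (IH3 _ _ _ _ S3). lia.
  - apply inside_cyc, inside_cyc, (inside_trans _ _ _ (pos k)).
    + apply inside_cyc, HK.
    + apply (IH2 _ _ _ _ S2). lia.
  - apply (inside_trans _ _ _ (pos k)); [exact HK|].
    apply (IH1 _ _ _ _ S1). lia.
Qed.

Lemma stacked_in_face pos t a b c k :
  stacked (inside_at pos) t a b c k -> in_face pos (face_vertex t a b c k) a b c.
Proof.
  intros S w [->|[->|[->|Hw]]]; auto. do 3 right. exact (stacked_inside pos t a b c k S w Hw).
Qed.

Lemma planar_stacked pos t : forall a b c k,
  (a < k)%nat -> (b < k)%nat -> (c < k)%nat ->
  orient (pos a) (pos b) (pos c) <> 0 -> stacked (inside_at pos) t a b c k ->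
  planar (face_edge t a b c k) (face_vertex t a b c k) pos.
Proof.
  induction t as [|t1 IH1 t2 IH2 t3 IH3]; intros a b c k Ha Hb Hc Hn S.
  - eapply crossing_free_sub; [| |intros ? ? H; exact H| |apply planar_triangle; exact Hn];
      unfold face_vertex; simpl; auto; intros; lia.
  - assert (Nab : a <> b) by (intros ->; apply Hn, orient_PPX).
    assert (Nbc : b <> c) by (intros ->; apply Hn, orient_PQQ).
    assert (Nac : a <> c) by (intros ->; apply Hn, orient_PQP).
    simpl in S. destruct S as [HK [S1 [S2 S3]]].
    destruct (inside_subtriangles_nondeg _ _ _ _ HK) as [N1 [N2 N3]].
    assert (P : planar (face_edge (Node t1 t2 t3) a b c k)
      (fun x => face_vertex t1 a b k (k + 1) x \/ face_vertex t2 b c k (k + 1 + nins t1) x \/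
                face_vertex t3 a c k (k + 1 + nins t1 + nins t2) x) pos).
    { cbn [face_edge]. apply (planar_glue_faces a b c k); auto;
        first [ apply face_edges_within; lia | apply stacked_in_face; assumption
              | apply IH1; auto; lia | apply IH2; auto; lia | apply IH3; auto; lia
              | unfold face_vertex; lia ]. }
    eapply crossing_free_sub; [| | | |exact P]; intros; try apply face_vertex_node; auto.
Qed.

(** * Boxes and grid placements *)

Open Scope Z_scope.

Definition boxZ (L1 L2 T K : Z * Z) : Prop :=
  Z.max (snd L1) (snd L2) < snd K < snd T /\
  Z.min (fst L1) (fst L2) < fst K < Z.max (fst L1) (fst L2).

Definition in_boxZ (P Q R K : Z * Z) : Prop :=
  boxZ P Q R K \/ boxZ Q R P K \/ boxZ P R Q K.

Lemma boxZ_swap L1 L2 T K : boxZ L1 L2 T K -> boxZ L2 L1 T K.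
Proof.
  unfold boxZ. now rewrite (Z.max_comm (snd L1)), (Z.min_comm (fst L1)), (Z.max_comm (fst L1)).
Qed.

Lemma in_boxZ_swap P Q R K : in_boxZ P Q R K -> in_boxZ Q P R K.
Proof.
  intros [B|[B|B]]; [left; now apply boxZ_swap|right; right; exact B|right; left; exact B].
Qed.

Lemma in_boxZ_cyc P Q R K : in_boxZ P Q R K -> in_boxZ Q R P K.
Proof.
  intros [B|[B|B]]; [right; right; now apply boxZ_swap|left; exact B
                    |right; left; now apply boxZ_swap].
Qed.

Lemma boxZ_top_unique L1 L2 T K0 K : boxZ L1 L2 T K0 -> in_boxZ L1 L2 T K -> boxZ L1 L2 T K.
Proof. unfold in_boxZ, boxZ. intros H [B|[B|B]]; auto; lia. Qed.

Lemma in_boxZ_of_in_box P Q R K : in_box P Q R (IZpt K) -> in_boxZ P Q R K.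
Proof.
  destruct K as [X Y]. unfold IZpt, in_box, box_top, in_open_rect, in_boxZ, boxZ; cbn [fst snd].
  intros [[H [[A B] [C D]]]|[[H [[A B] [C D]]]|[H [[A B] [C D]]]]];
    apply lt_IZR in A, B, C, D; lia.
Qed.

Lemma inA_of_in_boxZ n P Q R K :
  inA n P -> inA n Q -> inA n R -> in_boxZ P Q R K -> inA n K.
Proof. unfold inA, in_boxZ, boxZ. lia. Qed.

Definition grid_in (d e : Z) (P Q R : Z * Z) (i j s : Z) : Prop :=
  forall x y, i <= x < i + s -> j <= y < j + s -> in_boxZ P Q R (d * x, e * y).

Definition room (d e : Z) (P Q R : Z * Z) (i j s s' : Z) : Prop :=
  exists i' j', i <= i' /\ i' + s' <= i + s /\ j <= j' /\ j' + s' <= j + s /\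
    grid_in d e P Q R i' j' s'.

Lemma room_swap d e P Q R i j s s' : room d e P Q R i j s s' -> room d e Q P R i j s s'.
Proof.
  intros [i' [j' [H1 [H2 [H3 [H4 G]]]]]]. exists i', j'. repeat split; auto.
  intros x y Hx Hy. now apply in_boxZ_swap, G.
Qed.

(* The new vertex [K] goes [n1] columns and [nb] rows into the grid: the rows
   below [K] serve the lower face, the columns left and right of [K] above it
   the two upper faces. *)
Lemma grid_split_left d e L1 L2 T i j s nb n1 n2 :
  0 < d -> 0 < e -> 0 <= nb -> 0 <= n1 -> 0 <= n2 -> 1 + nb + n1 + n2 <= s ->
  fst L1 < fst L2 ->
  (forall x y, i <= x < i + s -> j <= y < j + s -> boxZ L1 L2 T (d * x, e * y)) ->
  let K := (d * (i + n1), e * (j + nb)) in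
  room d e L1 L2 K i j s nb /\ room d e L1 T K i j s n1 /\ room d e L2 T K i j s n2.
Proof.
  intros Hd He Hb H1 H2 Hs Hlt Hbox; cbv zeta.
  assert (HK := Hbox (i + n1) (j + nb) ltac:(lia) ltac:(lia)).
  assert (Mx : forall x x', x < x' -> d * x < d * x') by (intros; now apply Z.mul_lt_mono_pos_l).
  assert (My : forall y y', y < y' -> e * y < e * y') by (intros; now apply Z.mul_lt_mono_pos_l).
  unfold boxZ in HK; cbn [fst snd] in HK.
  split; [|split].
  - exists i, j. repeat split; try lia. intros x y Hx Hy. left.
    pose proof (Hbox x y ltac:(lia) ltac:(lia)) as B.
    pose proof (My y (j + nb) ltac:(lia)).
    unfold boxZ in *; cbn [fst snd] in *; lia.
  - exists i, (j + nb + 1). repeat split; try lia. intros x y Hx Hy. right; right.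
    pose proof (Hbox x y ltac:(lia) ltac:(lia)) as B.
    pose proof (Mx x (i + n1) ltac:(lia)). pose proof (My (j + nb) y ltac:(lia)).
    unfold boxZ in *; cbn [fst snd] in *; lia.
  - exists (i + n1 + 1), (j + nb + 1). repeat split; try lia. intros x y Hx Hy. right; right.
    pose proof (Hbox x y ltac:(lia) ltac:(lia)) as B.
    pose proof (Mx (i + n1) x ltac:(lia)). pose proof (My (j + nb) y ltac:(lia)).
    unfold boxZ in *; cbn [fst snd] in *; lia.
Qed.

Lemma grid_split_top d e L1 L2 T i j s nb n1 n2 :
  0 < d -> 0 < e -> 0 <= nb -> 0 <= n1 -> 0 <= n2 -> 1 + nb + n1 + n2 <= s ->
  (forall x y, i <= x < i + s -> j <= y < j + s -> boxZ L1 L2 T (d * x, e * y)) ->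
  exists x y, i <= x < i + s /\ j <= y < j + s /\
    room d e L1 L2 (d * x, e * y) i j s nb /\ room d e L1 T (d * x, e * y) i j s n1 /\
    room d e L2 T (d * x, e * y) i j s n2.
Proof.
  intros Hd He Hb H1 H2 Hs Hbox.
  assert (Hx := proj2 (Hbox i j ltac:(lia) ltac:(lia))); cbn [fst snd] in Hx.
  destruct (Z.lt_ge_cases (fst L1) (fst L2)) as [L|L].
  - exists (i + n1), (j + nb). split; [lia|]. split; [lia|].
    now apply grid_split_left.
  - destruct (grid_split_left d e L2 L1 T i j s nb n2 n1) as [R0 [R2 R1]]; auto; try lia.
    + intros x y Hx' Hy'. now apply boxZ_swap, Hbox.
    + exists (i + n2), (j + nb). split; [lia|]. split; [lia|].
      split; [now apply room_swap|]. auto.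
Qed.

Lemma grid_split d e P Q R i j n1 n2 n3 :
  0 < d -> 0 < e -> 0 <= n1 -> 0 <= n2 -> 0 <= n3 ->
  grid_in d e P Q R i j (1 + n1 + n2 + n3) ->
  exists x y, i <= x < i + (1 + n1 + n2 + n3) /\ j <= y < j + (1 + n1 + n2 + n3) /\
    room d e P Q (d * x, e * y) i j (1 + n1 + n2 + n3) n1 /\
    room d e Q R (d * x, e * y) i j (1 + n1 + n2 + n3) n2 /\
    room d e P R (d * x, e * y) i j (1 + n1 + n2 + n3) n3.
Proof.
  intros Hd He H1 H2 H3 G.
  destruct (G i j ltac:(lia) ltac:(lia)) as [B|[B|B]].
  - destruct (grid_split_top d e P Q R i j (1 + n1 + n2 + n3) n1 n3 n2)
      as [x [y [Hx [Hy [R1 [R3 R2]]]]]]; auto; try lia.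
    + intros x y Hx Hy. exact (boxZ_top_unique _ _ _ _ _ B (G x y Hx Hy)).
    + exists x, y. auto.
  - destruct (grid_split_top d e Q R P i j (1 + n1 + n2 + n3) n2 n1 n3)
      as [x [y [Hx [Hy [R2 [R1 R3]]]]]]; auto; try lia.
    + intros x y Hx Hy. exact (boxZ_top_unique _ _ _ _ _ B (in_boxZ_cyc _ _ _ _ (G x y Hx Hy))).
    + exists x, y. do 2 (split; [lia|]). split; [now apply room_swap|]. auto using room_swap.
  - destruct (grid_split_top d e P R Q i j (1 + n1 + n2 + n3) n3 n1 n2)
      as [x [y [Hx [Hy [R3 [R1 R2]]]]]]; auto; try lia.
    + intros x y Hx Hy. apply (boxZ_top_unique _ _ _ _ _ B).
      now apply in_boxZ_swap, in_boxZ_cyc, in_boxZ_cyc, G.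
    + exists x, y. do 4 (split; auto). now apply room_swap.
Qed.

Definition boxed (h : nat -> Z * Z) (a b c x : nat) : Prop := in_boxZ (h a) (h b) (h c) (h x).

Lemma stacked_boxed_ext h h' t a b c k :
  (forall w, face_vertex t a b c k w -> h w = h' w) ->
  stacked (boxed h) t a b c k -> stacked (boxed h') t a b c k.
Proof.
  intros E. apply stacked_impl. intros x y z v Hx Hy Hz Hv. unfold boxed.
  now rewrite <- (E x), <- (E y), <- (E z), <- (E v).
Qed.

Definition grid_point (d e i j s : Z) (p : Z * Z) : Prop :=
  exists x y, i <= x < i + s /\ j <= y < j + s /\ p = (d * x, e * y).

Lemma grid_point_sub d e i j s i' j' s' p :
  i <= i' -> i' + s' <= i + s -> j <= j' -> j' + s' <= j + s ->
  grid_point d e i' j' s' p -> grid_point d e i j s p.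
Proof. intros H1 H2 H3 H4 [x [y [Hx [Hy E]]]]. exists x, y. repeat split; auto; lia. Qed.

Definition placeable (d e : Z) (t : stack) : Prop :=
  forall a b c k h0 i j, (a < k)%nat -> (b < k)%nat -> (c < k)%nat ->
    grid_in d e (h0 a) (h0 b) (h0 c) i j (Z.of_nat (nins t)) ->
    exists h, (forall w, ~ (k <= w < k + nins t)%nat -> h w = h0 w) /\
      (forall w, (k <= w < k + nins t)%nat -> grid_point d e i j (Z.of_nat (nins t)) (h w)) /\
      stacked (boxed h) t a b c k.

Lemma placeable_node d e t1 t2 t3 : 0 < d -> 0 < e ->
  placeable d e t1 -> placeable d e t2 -> placeable d e t3 -> placeable d e (Node t1 t2 t3).
Proof.
  intros Hd He IH1 IH2 IH3 a b c k h0 i j Ha Hb Hc G.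
  set (s := Z.of_nat (nins (Node t1 t2 t3))) in *.
  assert (Es : s = 1 + Z.of_nat (nins t1) + Z.of_nat (nins t2) + Z.of_nat (nins t3))
    by (unfold s; cbn [nins]; lia).
  set (n1 := nins t1) in *; set (n2 := nins t2) in *; set (n3 := nins t3) in *.
  rewrite Es in G.
  destruct (grid_split d e _ _ _ i j (Z.of_nat n1) (Z.of_nat n2) (Z.of_nat n3) Hd He
              ltac:(lia) ltac:(lia) ltac:(lia) G)
    as [x [y [Hx [Hy [[i1 [j1 [? [? [? [? G1]]]]]] [[i2 [j2 [? [? [? [? G2]]]]]] [i3 [j3 [? [? [? [? G3]]]]]]]]]]]].
  rewrite <- Es in *.
  set (h1 := fun w => if Nat.eqb w k then (d * x, e * y) else h0 w).
  assert (E1 : forall w, w <> k -> h1 w = h0 w)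
    by (intros w Hw; unfold h1; now rewrite (proj2 (Nat.eqb_neq w k) Hw)).
  assert (E1k : h1 k = (d * x, e * y)) by (unfold h1; now rewrite Nat.eqb_refl).
  destruct (IH1 a b k (k + 1)%nat h1 i1 j1) as [h2 [O2 [P2 S2]]]; try lia.
  { now rewrite E1k, !E1 by lia. }
  destruct (IH2 b c k (k + 1 + n1)%nat h2 i2 j2) as [h3 [O3 [P3 S3]]]; try lia.
  { now rewrite !O2, E1k, !E1 by lia. }
  destruct (IH3 a c k (k + 1 + n1 + n2)%nat h3 i3 j3) as [h4 [O4 [P4 S4]]]; try lia.
  { now rewrite !O3, !O2, E1k, !E1 by lia. }
  exists h4. split; [|split].
  - intros w Hw. simpl in Hw. rewrite O4, O3, O2, E1 by lia. reflexivity.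
  - intros w Hw. simpl in Hw.
    destruct (Nat.eq_dec w k) as [->|Nk].
    { rewrite O4, O3, O2, E1k by lia. exists x, y. auto. }
    destruct (le_lt_dec (k + 1 + n1) w); [destruct (le_lt_dec (k + 1 + n1 + n2) w)|].
    + apply (grid_point_sub _ _ _ _ _ i3 j3 (Z.of_nat n3)); try lia.
      apply P4; lia.
    + rewrite O4 by lia. apply (grid_point_sub _ _ _ _ _ i2 j2 (Z.of_nat n2)); try lia.
      apply P3; lia.
    + rewrite O4, O3 by lia. apply (grid_point_sub _ _ _ _ _ i1 j1 (Z.of_nat n1)); try lia.
      apply P2; lia.
  - simpl. split; [|split; [|split]].
    + unfold boxed. rewrite !O4, !O3, !O2, E1k, !E1 by lia. apply G; lia.
    + apply (stacked_boxed_ext h2); auto.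
      intros w Hw. unfold face_vertex in Hw. rewrite O4, O3 by lia. reflexivity.
    + apply (stacked_boxed_ext h3); auto.
      intros w Hw. unfold face_vertex in Hw. rewrite O4 by lia. reflexivity.
    + exact S4.
Qed.

Lemma grid_placement d e t : 0 < d -> 0 < e -> placeable d e t.
Proof.
  intros Hd He. induction t as [|t1 IH1 t2 IH2 t3 IH3].
  - intros a b c k h0 i j _ _ _ _. exists h0. simpl. repeat split; auto; intros; lia.
  - now apply placeable_node.
Qed.

(** * The exponential map tau *)

Open Scope R_scope.

Lemma exp_gap_inside (x1 x2 x3 xk Y1 Y2 Y3 Yk M : R) :
  1 <= M -> 0 <= x1 <= M -> 0 <= x2 <= M -> 0 <= x3 <= M -> 0 <= xk <= M ->
  x1 + 1 <= xk -> xk + 1 <= x2 -> 0 < Y1 -> 0 < Y2 ->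
  2 * M * Y1 <= Yk -> 2 * M * Y2 <= Yk -> 2 * M * Yk <= Y3 ->
  inside_with 1 (x1, Y1) (x2, Y2) (x3, Y3) (xk, Yk).
Proof.
  intros HM H1 H2 H3 Hk L1 L2 P1 P2 B1 B2 B3.
  unfold inside_with, orient; cbn [fst snd]. rewrite !Rmult_1_l.
  assert (MY1 : M * Y1 <= Yk / 2) by lra. assert (MY2 : M * Y2 <= Yk / 2) by lra.
  assert (MYk : M * Yk <= Y3 / 2) by lra.
  assert (Y1k : 2 * Y1 <= Yk) by nra. assert (Y2k : 2 * Y2 <= Yk) by nra.
  assert (Yk3 : 2 * Yk <= Y3) by nra.
  split; [|split].
  - assert ((x2 - x1 - 2) * (Yk - Y1) >= 0) by (apply Rle_ge, Rmult_le_pos; lra).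
    assert (Y2 * (xk - x1) <= Y2 * M) by nra.
    assert (Y1 * (xk - x1) >= 0) by nra.
    lra.
  - assert ((x3 - x2 + M) * (Yk - Y2) >= 0) by (apply Rle_ge, Rmult_le_pos; lra).
    assert ((x2 - xk - 1) * (Y3 - Y2) >= 0) by (apply Rle_ge, Rmult_le_pos; lra).
    assert (M * Y2 >= 0) by nra.
    lra.
  - assert ((xk - x1 - 1) * Y3 >= 0) by nra.
    assert ((x1 - x3 + M) * Yk >= 0) by nra.
    assert ((x3 - xk + M) * Y1 >= 0) by nra.
    lra.
Qed.

Lemma powerRZ_gap (D : R) (y y' : Z) : 1 <= D -> (0 <= y < y')%Z ->
  0 < powerRZ D y /\ D * powerRZ D y <= powerRZ D y'.
Proof.
  intros HD Hy.
  rewrite <- (Z2Nat.id y), <- (Z2Nat.id y'), <- !pow_powerRZ by lia.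
  split; [apply pow_lt; lra|].
  replace (Z.to_nat y') with (S (Z.to_nat y) + (Z.to_nat y' - S (Z.to_nat y)))%nat by lia.
  rewrite pow_add, <- tech_pow_Rmult.
  pose proof (pow_R1_Rle D (Z.to_nat y' - S (Z.to_nat y)) HD).
  pose proof (pow_lt D (Z.to_nat y) ltac:(lra)).
  rewrite <- (Rmult_1_r (D * _)) at 1. apply Rmult_le_compat_l; nra.
Qed.

Lemma IZR_inA_bound n x : (0 <= x <= 14 * Z.of_nat n)%Z -> 0 <= IZR x <= 14 * INR n.
Proof.
  intros H. rewrite INR_IZR_INZ, <- mult_IZR. split; apply IZR_le; lia.
Qed.

(* Since the base [28 n] of [tau] is twice the width of the grid, [tau] sends
   the box of a triangle strictly inside the image of the triangle. *)
Lemma tau_inside_top n L1 L2 T K : (1 <= n)%nat ->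
  inA n L1 -> inA n L2 -> inA n T -> inA n K -> boxZ L1 L2 T K -> (fst L1 < fst L2)%Z ->
  inside (tau n L1) (tau n L2) (tau n T) (tau n K).
Proof.
  intros Hn [A1 B1] [A2 B2] [A3 B3] [Ak Bk] [[Hy1 Hy2] [Hx1 Hx2]] Hlt.
  destruct L1 as [x1 y1], L2 as [x2 y2], T as [x3 y3], K as [xk yk]; cbn [fst snd] in *.
  assert (HD : INR (28 * n) = 2 * (14 * INR n)) by (rewrite mult_INR; simpl; ring).
  assert (HM : 1 <= 14 * INR n) by (apply le_INR in Hn; simpl in Hn; lra).
  destruct (powerRZ_gap (INR (28 * n)) y1 yk ltac:(lra) ltac:(lia)) as [P1 Q1].
  destruct (powerRZ_gap (INR (28 * n)) y2 yk ltac:(lra) ltac:(lia)) as [P2 Q2].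
  destruct (powerRZ_gap (INR (28 * n)) yk y3 ltac:(lra) ltac:(lia)) as [Pk Qk].
  rewrite HD in *.
  exists 1. split; [left; reflexivity|]. unfold tau; cbn [fst snd]. rewrite HD.
  apply (exp_gap_inside _ _ _ _ _ _ _ _ (14 * INR n)); auto; try apply IZR_inA_bound; try lia;
    rewrite <- plus_IZR; apply IZR_le; lia.
Qed.

Lemma tau_inside n P Q R K : (1 <= n)%nat ->
  inA n P -> inA n Q -> inA n R -> inA n K -> in_boxZ P Q R K ->
  inside (tau n P) (tau n Q) (tau n R) (tau n K).
Proof.
  intros Hn HP HQ HR HK Hb.
  assert (Top : forall L1 L2 T, inA n L1 -> inA n L2 -> inA n T -> boxZ L1 L2 T K ->
            inside (tau n L1) (tau n L2) (tau n T) (tau n K)).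
  { intros L1 L2 T H1 H2 H3 B.
    destruct (Z.lt_ge_cases (fst L1) (fst L2)) as [L|L].
    - apply tau_inside_top; auto.
    - apply inside_swap, tau_inside_top; auto; unfold boxZ in *; lia. }
  destruct Hb as [B|[B|B]].
  - apply Top; auto.
  - apply inside_cyc, inside_cyc, Top; auto.
  - apply inside_cyc, inside_swap, Top; auto.
Qed.

Lemma tau_orient_nonzero n P Q R K : (1 <= n)%nat ->
  inA n P -> inA n Q -> inA n R -> in_boxZ P Q R K ->
  orient (tau n P) (tau n Q) (tau n R) <> 0.
Proof.
  intros Hn HP HQ HR HK. apply (inside_nondeg _ _ _ (tau n K)), tau_inside; auto.
  now apply (inA_of_in_boxZ n P Q R).
Qed.

Lemma p3t_edges_face_edge t x y :
  In (x, y) (p3t_edges t) -> face_edge t 0 1 2 3 x y.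
Proof.
  intros [E|[E|[E|E]]];
    try (injection E as <- <-; apply tri_face_edge; unfold tri; tauto).
  now apply st_edges_face_edge.
Qed.

Lemma tau_drawing_planar n t (h : nat -> Z * Z) K : (1 <= n)%nat ->
  inA n (h 0%nat) -> inA n (h 1%nat) -> inA n (h 2%nat) ->
  in_boxZ (h 0%nat) (h 1%nat) (h 2%nat) K ->
  (forall w, (3 <= w < nverts t)%nat -> in_boxZ (h 0%nat) (h 1%nat) (h 2%nat) (h w)) ->
  stacked (boxed h) t 0 1 2 3 ->
  straight_line_planar (nverts t) (p3t_edges t) (fun w => tau n (h w)).
Proof.
  intros Hn H0 H1 H2 HK Hint Hst.
  assert (HA : forall w, face_vertex t 0 1 2 3 w -> inA n (h w)).
  { intros w [->|[->|[->|Hw]]]; auto.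
    apply (inA_of_in_boxZ n (h 0%nat) (h 1%nat) (h 2%nat)); [..|apply Hint]; auto. }
  assert (Hin : stacked (inside_at (fun w => tau n (h w))) t 0 1 2 3).
  { apply (stacked_impl (boxed h)); auto. intros. apply tau_inside; auto. }
  apply (crossing_free_sub (face_edge t 0 1 2 3) (face_vertex t 0 1 2 3)
           (face_edge t 0 1 2 3) (face_vertex t 0 1 2 3));
    auto using p3t_edges_face_edge; try (unfold face_vertex, nverts; intros; lia).
  apply planar_stacked; auto. now apply (tau_orient_nonzero n _ _ _ K).
Qed.

(** * A grid of powers of two in the rectangle *)

Lemma exists_last_below (P : nat -> Prop) q :
  P 0%nat -> ~ P q -> exists a, (a < q)%nat /\ P a /\ ~ P (S a).
Proof.
  induction q as [|q IH]; intros H0 Hq; [contradiction|].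
  destruct (classic (P q)) as [Hp|Hp].
  - exists q. auto.
  - destruct (IH H0 Hp) as [a [Ha1 Ha2]]. exists a. split; [lia|auto].
Qed.

(* Take [a] maximal with [2^a s < w]; if also [2^(q-a) s >= h], then
   [w h <= 2^(a+1) s * 2^(q-a) s]. *)
Lemma split_power_of_two q (s w h : R) : 0 <= s -> s < w -> s < h ->
  2 * 2 ^ q * s ^ 2 < w * h ->
  exists a, (a <= q)%nat /\ 2 ^ a * s < w /\ 2 ^ (q - a) * s < h.
Proof.
  intros Hs Hw Hh Ha.
  destruct (classic (2 ^ q * s < w)) as [Hq|Hq].
  { exists q. rewrite Nat.sub_diag. simpl. repeat split; auto; lra. }
  destruct (exists_last_below (fun a => 2 ^ a * s < w) q ltac:(simpl; lra) Hq)
    as [a [Haq [Pa Na]]].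
  exists a. split; [lia|]. split; auto.
  apply Rnot_le_lt. intro Hle. apply Rnot_lt_le in Na.
  assert (E : 2 ^ S a * 2 ^ (q - a) = 2 * 2 ^ q).
  { rewrite <- pow_add. replace (S a + (q - a))%nat with (S q) by lia. reflexivity. }
  assert (0 < 2 ^ S a) by (apply pow_lt; lra).
  assert (w * h <= (2 ^ S a * s) * (2 ^ (q - a) * s)) by (apply Rmult_le_compat; lra).
  nra.
Qed.

Lemma up_grid_bounds (d : Z) (x1 w : R) (s x : Z) :
  0 < IZR d -> IZR d * IZR s < w -> (up (x1 / IZR d) <= x < up (x1 / IZR d) + s)%Z ->
  x1 < IZR (d * x) < x1 + w.
Proof.
  intros Hd Hw Hx. rewrite mult_IZR.
  destruct (archimed (x1 / IZR d)) as [A1 A2].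
  assert (L1 : IZR (up (x1 / IZR d)) <= IZR x) by (apply IZR_le; lia).
  assert (L2 : IZR x + 1 <= IZR (up (x1 / IZR d)) + IZR s)
    by (rewrite <- !plus_IZR; apply IZR_le; lia).
  assert (Ex : x1 = IZR d * (x1 / IZR d)) by (field; lra).
  split; nra.
Qed.

Lemma rect_grid (x1 x2 y1 y2 : R) (q s : nat) :
  2 * INR (2 ^ q) * INR s ^ 2 < (x2 - x1) * (y2 - y1) -> INR s < x2 - x1 -> INR s < y2 - y1 ->
  exists d e i j, (0 < d)%Z /\ (0 < e)%Z /\ Z.of_nat (2 ^ q) = (d * e)%Z /\
    forall x y, (i <= x < i + Z.of_nat s)%Z -> (j <= y < j + Z.of_nat s)%Z ->
      in_open_rect x1 x2 y1 y2 (IZpt (d * x, e * y)%Z).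
Proof.
  intros Harea Hw Hh. rewrite pow_INR in Harea.
  destruct (split_power_of_two q (INR s) (x2 - x1) (y2 - y1) (pos_INR s) Hw Hh Harea)
    as [a [Haq [Ha1 Ha2]]].
  assert (P2 : forall k, IZR (Z.of_nat (2 ^ k)) = 2 ^ k)
    by (intros k; rewrite <- INR_IZR_INZ, pow_INR; reflexivity).
  set (d := Z.of_nat (2 ^ a)); set (e := Z.of_nat (2 ^ (q - a))).
  assert (Hd : 0 < IZR d) by (unfold d; rewrite P2; apply pow_lt; lra).
  assert (He : 0 < IZR e) by (unfold e; rewrite P2; apply pow_lt; lra).
  rewrite INR_IZR_INZ, <- (P2 a) in Ha1. rewrite INR_IZR_INZ, <- (P2 (q - a)%nat) in Ha2.
  exists d, e, (up (x1 / IZR d)), (up (y1 / IZR e)).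
  split; [now apply lt_0_IZR|]. split; [now apply lt_0_IZR|].
  split; [unfold d, e; rewrite <- Nat2Z.inj_mul, <- Nat.pow_add_r; do 3 f_equal; lia|].
  intros x y Hx Hy. unfold in_open_rect, IZpt; cbn [fst snd].
  pose proof (up_grid_bounds d x1 (x2 - x1) (Z.of_nat s) x Hd Ha1 Hx).
  pose proof (up_grid_bounds e y1 (y2 - y1) (Z.of_nat s) y He Ha2 Hy).
  split; lra.
Qed.

Lemma rect_grid_of_area (x1 x2 y1 y2 : R) (q s m : nat) : (s < m)%nat ->
  (x2 - x1) * (y2 - y1) > 8 * INR m ^ 2 * INR (2 ^ q) ->
  x2 - x1 > 2 * INR m -> y2 - y1 > INR m ->
  exists d e i j, (0 < d)%Z /\ (0 < e)%Z /\ Z.of_nat (2 ^ q) = (d * e)%Z /\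
    forall x y, (i <= x < i + Z.of_nat s)%Z -> (j <= y < j + Z.of_nat s)%Z ->
      in_open_rect x1 x2 y1 y2 (IZpt (d * x, e * y)%Z).
Proof.
  intros Hs Harea Hw Hh. apply lt_INR in Hs. pose proof (pos_INR s).
  assert (0 < INR (2 ^ q)) by (apply lt_0_INR, Nat.neq_0_lt_0, Nat.pow_nonzero; lia).
  assert (INR s ^ 2 <= INR m ^ 2) by (apply pow_incr; lra).
  apply rect_grid; nra.
Qed.

Lemma Rpower_0_l x : Rpower 0 x = 1.
Proof.
  unfold Rpower, ln. destruct (Rlt_dec 0 0) as [H|H]; [exfalso; lra|].
  now rewrite Rmult_0_r, exp_0.
Qed.

Lemma n_pos_of_Rpower alpha n q : (1 <= q)%nat ->
  Rpower (INR n) alpha = INR (2 ^ q) -> (1 <= n)%nat.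
Proof.
  intros Hq Hn. destruct n; [|lia]. exfalso.
  assert (H2 : (2 ^ 1 <= 2 ^ q)%nat) by (apply Nat.pow_le_mono_r; lia).
  apply le_INR in H2. rewrite <- Hn in H2. change (INR 0) with 0 in H2.
  rewrite Rpower_0_l in H2. simpl in H2. lra.
Qed.

Lemma lattice_point_in_rect x1 x2 y1 y2 :
  1 < x2 - x1 -> 1 < y2 - y1 -> in_open_rect x1 x2 y1 y2 (IZpt (up x1, up y1)).
Proof.
  intros Hx Hy. destruct (archimed x1), (archimed y1).
  unfold in_open_rect, IZpt; cbn [fst snd]. lra.
Qed.

Lemma inB_grid_point n N d e x y : Z.of_nat N = (d * e)%Z ->
  inA n (d * x, e * y)%Z -> inB n N (d * x, e * y)%Z.
Proof.
  intros HN HA. split; [exact HA|]. left. exists (x * y)%Z. cbn [fst snd]. rewrite HN. ring.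
Qed.

Theorem lemma9
  (alpha : R) (n q : nat)
  (Halpha : 0 < alpha <= 1)
  (Hq : (1 <= q)%nat)
  (Hn : Rpower (INR n) alpha = INR (2 ^ q))
  (m : nat) (t : stack) (Hm : nverts t = m)
  (p1 p2 p3 : Z * Z)
  (Hp1 : inB n (2 ^ q) p1) (Hp2 : inB n (2 ^ q) p2) (Hp3 : inB n (2 ^ q) p3)
  (Htop : has_strict_top p1 p2 p3)
  (x1 x2 y1 y2 : R)
  (HR : forall r : pt, in_open_rect x1 x2 y1 y2 r -> in_box p1 p2 p3 r)
  (Harea : (x2 - x1) * (y2 - y1) > 8 * INR m ^ 2 * Rpower (INR n) alpha)
  (Hw : x2 - x1 > 2 * INR m)
  (Hh : y2 - y1 > INR m) :
  exists pos : nat -> pt,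
    straight_line_planar m (p3t_edges t) pos /\
    pos 0%nat = tau n p1 /\ pos 1%nat = tau n p2 /\ pos 2%nat = tau n p3 /\
    (forall i, (3 <= i < m)%nat ->
       exists p : Z * Z, inB n (2 ^ q) p /\ in_open_rect x1 x2 y1 y2 (IZpt p) /\
         pos i = tau n p).
Proof.
  assert (Hn1 : (1 <= n)%nat) by exact (n_pos_of_Rpower alpha n q Hq Hn).
  rewrite Hn in Harea.
  destruct (rect_grid_of_area x1 x2 y1 y2 q (nins t) m) as [d [e [i [j [Hd [He [Hde Hrect]]]]]]];
    [subst m; unfold nverts; lia|lra..|].
  assert (Hm1 : 1 <= INR m) by (apply (le_INR 1); subst m; unfold nverts; lia).
  set (h0 := fun w : nat => match w with 0%nat => p1 | 1%nat => p2 | _ => p3 end).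
  assert (Hgrid : grid_in d e (h0 0%nat) (h0 1%nat) (h0 2%nat) i j (Z.of_nat (nins t)))
    by (intros x y Hx Hy; apply in_boxZ_of_in_box, HR, Hrect; auto).
  destruct (grid_placement d e t Hd He 0%nat 1%nat 2%nat 3%nat h0 i j) as [h [Ho [Hpts Hst]]];
    [lia|lia|lia|exact Hgrid|].
  assert (Hcorner : forall w, (w < 3)%nat -> h w = h0 w) by (intros; apply Ho; lia).
  assert (Hint : forall w, (3 <= w < m)%nat -> exists x y,
    in_boxZ p1 p2 p3 (d * x, e * y)%Z /\ in_open_rect x1 x2 y1 y2 (IZpt (d * x, e * y)%Z) /\
    h w = (d * x, e * y)%Z).
  { intros w Hw'. subst m. destruct (Hpts w ltac:(unfold nverts in Hw'; lia))
      as [x [y [Hx [Hy ->]]]]. exists x, y. auto. }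
  exists (fun w => tau n (h w)). rewrite !Hcorner by lia. subst m.
  split; [|split; [|split; [|split]]]; auto.
  - apply (tau_drawing_planar n t h (up x1, up y1)); rewrite ?Hcorner by lia;
      try apply Hp1; try apply Hp2; try apply Hp3; auto.
    + apply in_boxZ_of_in_box, HR, lattice_point_in_rect; lra.
    + intros w Hw'. destruct (Hint w Hw') as [x [y [B [_ ->]]]]. exact B.
  - intros w Hw'. destruct (Hint w Hw') as [x [y [B [Hr ->]]]].
    exists (d * x, e * y)%Z. split; [|split; [exact Hr|reflexivity]].
    apply inB_grid_point; auto.
    apply (inA_of_in_boxZ n p1 p2 p3); [apply Hp1|apply Hp2|apply Hp3|exact B].
Qed.
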